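(* Let $G$ be a group, $E$ a real Banach space, and $f\colon G\to E$ such that $\|f(xy)+f(xy^{-1})-2f(x)\|\le c$ for all $x,y\in G$, where $c>0$. Define $c_1=c+2\|f(1)\|$, $c_2=c+\|f(1)\|$, $c_3=c+c_1$, and $c_m=c+c_1+c_{m-2}$ for $m>3$. Then for every $x\in G$ and every $m\in\mathbb{N}$, $\|f(x^m)-mf(x)\|\le c_m$. *)

From HB Require Import structures.
From mathcomp Require Import all_boot all_order all_algebra.
From mathcomp Require Import all_classical all_reals all_analysis.
Set Implicit Arguments. Unset Strict Implicit. Unset Printing Implicit Defensive.
Import Order.TTheory GRing.Theory Num.Theory.
Import numFieldNormedType.Exports.
Local Open Scope ring_scope.

Definition is_group (G : Type) (mul : G -> G -> G) (inv : G -> G) (one : G) : Prop :=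
  [/\ (forall x y z, mul x (mul y z) = mul (mul x y) z),
      (forall x, mul one x = x), (forall x, mul x one = x),
      (forall x, mul (inv x) x = one) & (forall x, mul x (inv x) = one)].

Fixpoint gpow (G : Type) (mul : G -> G -> G) (one : G) (x : G) (m : nat) : G :=
  match m with 0 => one | k.+1 => mul x (gpow mul one x k) end.

(* The constants c_m of the paper, with a := ||f(1)||:
   c_1 = c + 2a, c_2 = c + a, c_3 = c + c_1, c_m = c + c_1 + c_{m-2} (m > 3).
   c_0 is not defined in the paper; we set it to 0 (it is never used since
   the statement quantifies over m >= 1). *)
Fixpoint cconst (R : numDomainType) (c a : R) (m : nat) : R :=
  match m with
  | 0 => 0
  | 1 => c + 2 * a
  | 2 => c + a
  | 3 => c + (c + 2 * a)
  | (k.+2 as n).+2 => c + (c + 2 * a) + cconst c a n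
  end.

From HB Require Import structures.
From mathcomp Require Import all_boot all_order all_algebra.
From mathcomp Require Import all_classical all_reals all_analysis.
Import Order.TTheory GRing.Theory Num.Theory.
Import numFieldNormedType.Exports.
Set Implicit Arguments. Unset Strict Implicit. Unset Printing Implicit Defensive.
Local Open Scope ring_scope.

(* Applying the hypothesis at (x, x^(m+2)) relates f(x^(m+3)) to f(x^-(m+1)),
   and applying it at (1, x^(m+1)) relates f(x^-(m+1)) back to f(x^(m+1)), up to
   c + 2||f(1)||.  Hence the defect ||f(x^m) - m f(x)|| grows by at most
   c + c_1 every two steps, starting from 0 at m = 1 and c + ||f(1)|| at m = 2
   (the pair (x, x) gives f(x^2) + f(1) ~ 2 f(x)). *)

Section GroupPowers.

Variables (G : Type) (mul : G -> G -> G) (inv : G -> G) (one : G).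
Hypothesis hG : is_group mul inv one.

Lemma gpow1 (x : G) : gpow mul one x 1 = x.
Proof. by case: hG => _ _ mulg1 _ _ /=; rewrite mulg1. Qed.

Lemma gpowSr (x : G) (m : nat) : gpow mul one x m.+1 = mul (gpow mul one x m) x.
Proof.
case: hG => mulgA mul1g mulg1 _ _.
elim: m => [|m IHm] /=; first by rewrite mul1g mulg1.
by move: IHm => /= IHm; rewrite IHm mulgA IHm.
Qed.

Lemma mul_inv_mulr (x y : G) : mul x (inv (mul y x)) = inv y.
Proof.
case: hG => mulgA mul1g mulg1 mulVg mulgV.
by rewrite -[LHS]mul1g -(mulVg y) -mulgA (mulgA y) mulgV mulg1.
Qed.

End GroupPowers.

Section QuasiJensen.

Variables (R : numDomainType) (E : normedModType R).
Variables (G : Type) (mul : G -> G -> G) (inv : G -> G) (one : G).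
Hypothesis hG : is_group mul inv one.
Variables (f : G -> E) (c : R).
Hypothesis hf : forall x y : G, `| f (mul x y) + f (mul x (inv y)) - 2%:R *: f x | <= c.

Let a := `| f one |.
Let pow := gpow mul one.

Lemma quasi_jensen_ge0 : 0 <= c.
Proof. exact: le_trans (normr_ge0 _) (hf one one). Qed.

Lemma norm_f_add_inv (y : G) : `| f y + f (inv y) | <= c + 2 * a.
Proof.
have [_ mul1g _ _ _] := hG.
have := hf one y; rewrite !mul1g => hy.
rewrite -[f y + _](subrK (2%:R *: f one)).
by rewrite (le_trans (ler_normD _ _)) // lerD // normrZ ger0_norm.
Qed.

Lemma quasi_jensen_pow2 (x : G) : `| f (pow x 2) - 2%:R *: f x | <= c + a.
Proof.
have [_ _ mulg1 _ mulgV] := hG.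
have := hf x x; rewrite mulgV => hx.
have -> : pow x 2 = mul x x by rewrite /pow /= mulg1.
rewrite -[f (mul x x)](addrK (f one)) addrAC.
by rewrite (le_trans (ler_normB _ _)) // lerD.
Qed.

Lemma quasi_jensen_pow_step (x : G) (m : nat) :
  `| f (pow x m.+3) - m.+3%:R *: f x |
    <= c + (c + 2 * a) + `| f (pow x m.+1) - m.+1%:R *: f x |.
Proof.
have hA := hf x (pow x m.+2).
rewrite /pow (gpowSr hG) (mul_inv_mulr hG) -(gpowSr hG) in hA.
have hB := norm_f_add_inv (pow x m.+1).
set A := f (pow x m.+3) in hA *; set B := f (inv (pow x m.+1)) in hA hB.
set P := f (pow x m.+1) in hB *.
rewrite -addn2 natrD scalerDl.
have -> : A - (m.+1%:R *: f x + 2%:R *: f x)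
    = (A + B - 2%:R *: f x) - (B + m.+1%:R *: f x).
  by rewrite addrAC addrKA opprD addrA.
have -> : B + m.+1%:R *: f x = (P + B) - (P - m.+1%:R *: f x).
  by rewrite (addrC P) addrKA opprK.
apply: le_trans (ler_normB _ _) _; rewrite -[c + _ + _]addrA lerD //.
by apply: le_trans (ler_normB _ _) _; rewrite lerD.
Qed.

Lemma quasi_jensen_pow (x : G) (m : nat) : (1 <= m)%N ->
  `| f (pow x m) - m%:R *: f x | <= cconst c a m.
Proof.
have c1_ge0 : 0 <= c + 2 * a.
  exact: addr_ge0 quasi_jensen_ge0 (mulr_ge0 (ler0n _ 2) (normr_ge0 _)).
elim/ltn_ind: m => -[|[|[|m]]] IHm // _.
- by rewrite /pow (gpow1 hG) scale1r subrr normr0.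
- exact: quasi_jensen_pow2.
- apply: le_trans (quasi_jensen_pow_step x m) _.
  case: m IHm => [|m] IHm.
    by rewrite /pow (gpow1 hG) scale1r subrr normr0 addr0.
  by rewrite lerD2l IHm.
Qed.

End QuasiJensen.

Theorem lemma2p3 (R : realType) (E : completeNormedModType R)
  (G : Type) (mul : G -> G -> G) (inv : G -> G) (one : G)
  (hG : is_group mul inv one)
  (f : G -> E) (c : R) (hc : 0 < c)
  (hf : forall x y : G, `| f (mul x y) + f (mul x (inv y)) - 2%:R *: f x | <= c) :
  forall (x : G) (m : nat), (1 <= m)%N ->
    `| f (gpow mul one x m) - m%:R *: f x | <= cconst c `| f one | m.
Proof.
exact: (@quasi_jensen_pow R E G mul inv one hG f c hf).
Qed.
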